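(* Let $\varepsilon\in\{0,\tfrac12\}$. Every commutative post-Lie algebra structure on the Schrödinger–Virasoro Lie algebra $\mathcal{SV}(\varepsilon)$ is trivial: if $\cdot$ is a commutative post-Lie algebra structure on $\mathcal{SV}(\varepsilon)$, then $x\cdot y=0$ for all $x,y\in\mathcal{SV}(\varepsilon)$.
   Context: For $\varepsilon\in\{0,\frac12\}$, $\mathcal{SV}(\varepsilon)$ is the complex Lie algebra with basis $\{L_i,Y_j,M_i\mid i\in\mathbb{Z},\ j\in\varepsilon+\mathbb{Z}\}$ and brackets $[L_m,L_n]=(m-n)L_{m+n}$, $[L_m,Y_n]=(\frac12 m-n)Y_{m+n}$, $[L_m,M_n]=-nM_{m+n}$, $[Y_m,Y_n]=(m-n)M_{m+n}$, $[Y_m,M_n]=[M_m,M_n]=0$. A commutative post-Lie algebra structure on a complex Lie algebra $(L,[\,,])$ is a $\mathbb{C}$-bilinear product $x\cdot y$ on $L$ such that for all $x,y,z\in L$: $x\cdot y=y\cdot x$; $[x,y]\cdot z=x\cdot(y\cdot z)-y\cdot(x\cdot z)$; and $x\cdot[y,z]=[x\cdot y,z]+[y,x\cdot z]$. *)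

(* The Schroedinger-Virasoro Lie algebra SV(eps) over C,
   realised as the free C-vector space (finitely supported functions, via
   multinomials' monalg) on the basis {L_i, Y_j, M_i}. *)
From mathcomp Require Import all_boot all_algebra.
From mathcomp Require Import Rstruct.
From mathcomp.real_closed Require Import complex.
From mathcomp Require Import finmap.
From mathcomp.multinomials Require Import monalg.

Set Implicit Arguments.
Unset Strict Implicit.
Unset Printing Implicit Defensive.

Import GRing.Theory Num.Theory.
Local Open Scope ring_scope.

Notation CC := (Rdefinitions.R[i]).

(* Basis indices:
     inl (inl i)  ~  L_i        (i : int)
     inl (inr k)  ~  Y_(k + eps) (k : int; so j ranges over eps + Z)
     inr i        ~  M_i        (i : int)                                *)
Definition SVidx := (int + int + int)%type.

Definition Lidx (i : int) : SVidx := inl (inl i).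
Definition Yidx (k : int) : SVidx := inl (inr k).
Definition Midx (i : int) : SVidx := inr i.

Definition SV := {malg CC[SVidx]}.

(* eps is encoded by a boolean e : eps = 0 if e = false, eps = 1/2 if e = true;
   thus 2*eps = (e : int). *)
Definition epsC (e : bool) : CC := (e%:R) / 2%:R.

Definition Lb (i : int) : SV := << Lidx i >>.
Definition Yb (k : int) : SV := << Yidx k >>.
Definition Mb (i : int) : SV := << Midx i >>.

Definition brb (e : bool) (a b : SVidx) : SV :=
  match a, b with
  | inl (inl m), inl (inl n) => (m - n)%:~R *: Lb (m + n)
  | inl (inl m), inl (inr k) =>
      (m%:~R / 2%:R - (k%:~R + epsC e)) *: Yb (m + k)
  | inl (inr k), inl (inl m) =>
      - (m%:~R / 2%:R - (k%:~R + epsC e)) *: Yb (m + k)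
  | inl (inl m), inr n => (- n)%:~R *: Mb (m + n)
  | inr n, inl (inl m) => n%:~R *: Mb (m + n)
  (* [Y_(a+eps), Y_(b+eps)] = (a - b) M_(a + b + 2 eps) *)
  | inl (inr a), inl (inr b) => (a - b)%:~R *: Mb (a + b + (e : int))
  | _, _ => 0
  end.

Definition svbr (e : bool) (x y : SV) : SV :=
  \sum_(a <- msupp x) \sum_(b <- msupp y) (x@_a * y@_b) *: brb e a b.

Definition is_comm_postLie (e : bool) (pr : SV -> SV -> SV) : Prop :=
  (forall (c : CC) (x y z : SV), pr (c *: x + y) z = c *: pr x z + pr y z) /\
  (forall (c : CC) (x y z : SV), pr x (c *: y + z) = c *: pr x y + pr x z) /\
  (forall x y : SV, pr x y = pr y x) /\
  (forall x y z : SV, pr (svbr e x y) z = pr x (pr y z) - pr y (pr x z)) /\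
  (forall x y z : SV, pr x (svbr e y z) = svbr e (pr x y) z + svbr e y (pr x z)).

(* Write phi for L_0 . (-).  Since ad L_0 grades SV(eps), the cyclic identity
   x.[y,z] + y.[z,x] + z.[x,y] = 0 of a commutative post-Lie algebra gives
   phi([a,b]) = (deg a - deg b) a.b on basis vectors.  Each family X in {L, Y, M}
   is a density module, [L_m, X_d] = (w m - d) X_(d+m) with weight w = 1, 1/2, 0,
   and the cyclic identity on (L_(-1), X_d, L_p), p = 1, 2, forces phi to vanish
   wherever w <> 1, i.e. on every Y_j and M_i.  Bracketing phi(L_a) with M_1 and
   the Y_j shows that phi(L_a) lies in the span of the M_i; this gives
   L_a.M_j = 0 and then, through [L_a, L_0].L_c = L_a.(L_0.L_c) - L_0.(L_a.L_c),
   phi(L_s) = 0.  So phi = 0 and a.b = 0 whenever deg a <> deg b.  Finally each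
   basis vector b is a nonzero multiple of [L_p, X] with p = +-1 and both factors
   of degree <> deg b, so the derivation rule kills a.b when deg a = deg b. *)

From HB Require Import structures.
From mathcomp Require Import all_boot all_order all_algebra.
From mathcomp Require Import Rstruct.
From mathcomp.real_closed Require Import complex.
From mathcomp Require Import finmap.
From mathcomp.multinomials Require Import monalg.
From mathcomp Require Import ring zify.

Set Implicit Arguments.
Unset Strict Implicit.
Unset Printing Implicit Defensive.

Import Order.TTheory GRing.Theory Num.Theory.
Local Open Scope ring_scope.

Section CommPostLie.
Variables (R : comRingType) (V : lmodType R) (br pr : V -> V -> V).
Hypothesis br_anti : forall x y, br x y = - br y x.
Hypothesis pr_linear : forall x c y z, pr x (c *: y + z) = c *: pr x y + pr x z.
Hypothesis prC : commutative pr.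
Hypothesis pr_br : forall x y z, pr x (br y z) = br (pr x y) z + br y (pr x z).

Lemma pr0r x : pr x 0 = 0.
Proof.
by apply: (addrI (pr x 0)); rewrite -{1}[pr x 0]scale1r -pr_linear scale1r !addr0.
Qed.

Lemma prZr x c y : pr x (c *: y) = c *: pr x y.
Proof. by rewrite -[c *: y]addr0 pr_linear pr0r addr0. Qed.

Lemma prDr x y z : pr x (y + z) = pr x y + pr x z.
Proof. by have := pr_linear x 1 y z; rewrite !scale1r. Qed.

Lemma pr_sumr x (I : Type) (s : seq I) (F : I -> V) :
  pr x (\sum_(i <- s) F i) = \sum_(i <- s) pr x (F i).
Proof. exact: (big_morph (pr x) (prDr x) (pr0r x)). Qed.

Lemma pr_cyclic x y z : pr x (br y z) + pr y (br z x) + pr z (br x y) = 0.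
Proof.
rewrite !pr_br (prC y x) (prC z x) (prC z y) [br y (pr x z)]br_anti.
rewrite [br z (pr x y)]br_anti [br x (pr y z)]br_anti.
by rewrite [X in X + _ = _]addrC !subrKA subrr.
Qed.

Lemma pr_br_eigen h a b (ca cb : R) : br a h = ca *: a -> br b h = cb *: b ->
  pr h (br a b) = (ca - cb) *: pr a b.
Proof.
move=> ah bh; have /eqP := pr_cyclic a b h.
rewrite addrC addr_eq0 => /eqP ->.
rewrite bh br_anti ah prZr -scaleNr prZr (prC b a) scalerBl.
by rewrite opprD scaleNr opprK addrC.
Qed.
End CommPostLie.

Lemma scale_cyclic_sum (R : comRingType) (V : lmodType R) (u1 u2 u3 w : V)
    (l1 l2 l3 m1 m2 m3 d1 d2 d3 : R) :
  d1 *: u1 = m1 *: w -> d2 *: u2 = m2 *: w -> d3 *: u3 = m3 *: w ->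
  l1 *: u1 + l2 *: u2 + l3 *: u3 = 0 ->
  (l1 * m1 * d2 * d3 + l2 * m2 * d1 * d3 + l3 * m3 * d1 * d2) *: w = 0.
Proof.
move=> E1 E2 E3 sum0.
have -> : (l1 * m1 * d2 * d3 + l2 * m2 * d1 * d3 + l3 * m3 * d1 * d2) *: w =
    (l1 * d2 * d3) *: (m1 *: w) + (l2 * d1 * d3) *: (m2 *: w)
    + (l3 * d1 * d2) *: (m3 *: w).
  by rewrite !scalerA -!scalerDl; congr (_ *: _); ring.
rewrite -E1 -E2 -E3 !scalerA.
have -> : l1 * d2 * d3 * d1 = (d1 * d2 * d3) * l1 by ring.
have -> : l2 * d1 * d3 * d2 = (d1 * d2 * d3) * l2 by ring.
have -> : l3 * d1 * d2 * d3 = (d1 * d2 * d3) * l3 by ring.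
by rewrite -!scalerA -!scalerDr sum0 !scaler0.
Qed.

(* The coefficient produced by the cyclic identity on (L_(-1), X, L_p), for X
   of weight w and degree d. *)
Definition cyclic_coef (R : comRingType) (w d p : R) : R :=
  (d - w * p) * (- w - (p + d)) * (d - (p - 1)) * (p - (d - 1))
  + (p + 1) * (d - w * (p - 1)) * (-1 - (p + d)) * (p - (d - 1))
  + (- w - d) * (w * p - (d - 1)) * (-1 - (p + d)) * (d - (p - 1)).

Lemma cyclic_coef_p1 (R : comRingType) (w d : R) :
  cyclic_coef w d 1 = - 4 * (1 - w) * (2 + w) * d.
Proof. rewrite /cyclic_coef; ring. Qed.

Lemma cyclic_coef_p2 (R : comRingType) (w : R) :
  cyclic_coef w (-1) 2 = 24 * (1 - w) * (1 + w).
Proof. rewrite /cyclic_coef; ring. Qed.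

(* Locked, since a failed unification of two distinct basis vectors would
   otherwise unfold the finitely-supported-function representation. *)
HB.lock Definition bv (a : SVidx) : SV := << a >>.

Lemma bvE (a : SVidx) : bv a = << a >>.
Proof. by rewrite unlock. Qed.

Lemma monalgUZ (K : choiceType) (R : ringType) (c : R) (k : K) :
  << c *g k >> = c *: (<< k >> : {malg R[K]}).
Proof. by apply/malgP => k'; rewrite mcoeffZ !mcoeffU mulr_natr. Qed.

Section SVBracket.
Variable e : bool.

Lemma brb_anti (a b : SVidx) : brb e a b = - brb e b a.
Proof.
by case: a => [[m|k]|n]; case: b => [[m'|k']|n'];
  rewrite /= ?oppr0 // -scaleNr ?(addrC m') ?(addrC k');
  congr (_ *: _); ring.
Qed.

Lemma svbr_basis (a b : SVidx) : svbr e (bv a) (bv b) = brb e a b.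
Proof.
by rewrite /svbr !bvE !msuppU oner_eq0 !big_seq_fset1 !mcoeffUU mulr1 scale1r.
Qed.

Lemma svbr_basisr (v : SV) (b : SVidx) :
  svbr e v (bv b) = \sum_(a <- msupp v) v@_a *: brb e a b.
Proof.
apply: eq_bigr => a _.
by rewrite bvE msuppU oner_eq0 big_seq_fset1 mcoeffUU mulr1.
Qed.

Lemma svbr_anti (x y : SV) : svbr e x y = - svbr e y x.
Proof.
rewrite /svbr exchange_big -sumrN; apply: eq_bigr => b _.
by rewrite -sumrN; apply: eq_bigr => a _; rewrite brb_anti scalerN mulrC.
Qed.

Lemma svbr0r (x : SV) : svbr e x 0 = 0.
Proof. by rewrite /svbr msupp0; apply: big1 => a _; rewrite big_seq_fset0. Qed.

Lemma svbr0l (x : SV) : svbr e 0 x = 0.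
Proof. by rewrite svbr_anti svbr0r oppr0. Qed.
End SVBracket.

Definition shift (n : int) (a : SVidx) : SVidx :=
  match a with
  | inl (inl i) => Lidx (n + i)
  | inl (inr k) => Yidx (n + k)
  | inr i => Midx (n + i)
  end.

Definition weight (a : SVidx) : CC :=
  match a with inl (inl _) => 1 | inl (inr _) => 2^-1 | inr _ => 0 end.

Definition deg (e : bool) (a : SVidx) : CC :=
  match a with
  | inl (inl i) => i%:~R
  | inl (inr k) => k%:~R + epsC e
  | inr i => i%:~R
  end.

Lemma shift0 (a : SVidx) : shift 0 a = a.
Proof. by case: a => [[i|k]|i]; rewrite /= add0r. Qed.

Lemma shiftD (m n : int) (a : SVidx) : shift m (shift n a) = shift (m + n) a.
Proof. by case: a => [[i|k]|i]; rewrite /= addrA. Qed.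

Lemma weight_shift (n : int) (a : SVidx) : weight (shift n a) = weight a.
Proof. by case: a => [[]|]. Qed.

Lemma weight_ge0 (a : SVidx) : 0 <= weight a.
Proof. by case: a => [[i|k]|i]; rewrite /= ?invr_ge0 ?ler01 ?ler0n. Qed.

Section Grading.
Variable e : bool.

Lemma deg_shift (n : int) (a : SVidx) : deg e (shift n a) = n%:~R + deg e a.
Proof. by case: a => [[i|k]|i]; rewrite /= intrD // addrA. Qed.

Lemma brb_Ll (m : int) (a : SVidx) :
  brb e (Lidx m) a = (weight a * m%:~R - deg e a) *: bv (shift m a).
Proof. by rewrite bvE; case: a => [[i|k]|i]; rewrite /=; congr (_ *: _); ring. Qed.

Lemma brb_Lr (a : SVidx) (m : int) :
  brb e a (Lidx m) = (deg e a - weight a * m%:~R) *: bv (shift m a).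
Proof. by rewrite brb_anti brb_Ll -scaleNr opprB. Qed.

Lemma brb_L0 (a : SVidx) : brb e a (Lidx 0) = deg e a *: bv a.
Proof. by rewrite brb_Lr mulr0 subr0 shift0. Qed.

Lemma brb_L_shift (p : int) (b : SVidx) :
  brb e (Lidx p) (shift (- p) b) = ((1 + weight b) * p%:~R - deg e b) *: bv b.
Proof.
rewrite brb_Ll shiftD addrN shift0 weight_shift deg_shift; congr (_ *: _).
by rewrite intrN; ring.
Qed.
End Grading.

Lemma big_msupp_single (K : choiceType) (R : ringType) (v : {malg R[K]})
    (f : K -> R) (k0 : K) :
  (forall k, k != k0 -> f k = 0) -> \sum_(k <- msupp v) v@_k * f k = v@_k0 * f k0.
Proof.
move=> f0; have [k0v|k0v] := boolP (k0 \in msupp v).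
  rewrite (big_fsetD1 k0) //= big1_fset ?addr0 // => k.
  by rewrite in_fsetD1 => /andP[kk0 _] _; rewrite f0 // mulr0.
rewrite mcoeff_outdom // mul0r big1_fset // => k kv _.
by rewrite f0 ?mulr0 //; apply: contraNneq k0v => <-.
Qed.

Definition M_supported (v : SV) : Prop :=
  (forall i, v@_(Lidx i) = 0) /\ (forall k, v@_(Yidx k) = 0).

Section Coefficients.
Variable e : bool.

Lemma mcoeff_svbr (v : SV) (b c : SVidx) :
  (svbr e v (bv b))@_c = \sum_(a <- msupp v) v@_a * (brb e a b)@_c.
Proof. by rewrite svbr_basisr raddf_sum; apply: eq_bigr => a _; exact: mcoeffZ. Qed.

Lemma mcoeff_svbr_M1 (v : SV) (i : int) :
  (svbr e v (bv (Midx 1)))@_(Midx (i + 1)) = - v@_(Lidx i).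
Proof.
rewrite mcoeff_svbr (@big_msupp_single _ _ _ _ (Lidx i)).
  by rewrite /= mcoeffZ mcoeffU eqxx mulr1n; ring.
case=> [[j|k]|j] //= ji; rewrite ?mcoeff0 //.
have ne : Midx (j + 1) != Midx (i + 1) by apply: contra ji => /eqP[/addIr ->].
by rewrite mcoeffZ mcoeffU (negbTE ne) mulr0.
Qed.

Lemma mcoeff_svbr_Y (v : SV) (k : int) :
  (svbr e v (bv (Yidx (k + 1))))@_(Midx (k + (k + 1) + e)) = - v@_(Yidx k).
Proof.
rewrite mcoeff_svbr (@big_msupp_single _ _ _ _ (Yidx k)).
  by rewrite /= mcoeffZ mcoeffU eqxx mulr1n; ring.
case=> [[j|l]|j] //= lk; rewrite ?mcoeff0 //.
  by rewrite mcoeffZ mcoeffU mulr0.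
have ne : Midx (l + (k + 1) + e) != Midx (k + (k + 1) + e).
  by apply: contra lk => /eqP[/addIr/addIr ->].
by rewrite mcoeffZ mcoeffU (negbTE ne) mulr0.
Qed.

Lemma M_supported_svbr (v : SV) :
  svbr e v (bv (Midx 1)) = 0 -> (forall k, svbr e v (bv (Yidx k)) = 0) -> M_supported v.
Proof.
move=> vM vY; split=> [i|k].
  by apply: oppr_inj; rewrite -mcoeff_svbr_M1 vM mcoeff0 oppr0.
by apply: oppr_inj; rewrite -mcoeff_svbr_Y vY mcoeff0 oppr0.
Qed.

Lemma svbr_M_supported (v : SV) (j : int) :
  M_supported v -> svbr e v (bv (Midx j)) = 0.
Proof.
case=> vL _; rewrite svbr_basisr big1_seq // => -[[i|k]|i] _ //=.
- by rewrite vL scale0r.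
- by rewrite scaler0.
- by rewrite scaler0.
Qed.
End Coefficients.

Lemma scaler_eq0_r (R : fieldType) (V : lmodType R) (c : R) (v : V) :
  c *: v = 0 -> c != 0 -> v = 0.
Proof. by move=> cv c0; apply: (scalerI c0); rewrite cv scaler0. Qed.

Lemma L_decomposition (e : bool) (b : SVidx) : exists p : int,
  [/\ p != 0, p%:~R != deg e b & (1 + weight b) * p%:~R != deg e b].
Proof.
have w1 : 0 < 1 + weight b by rewrite ltr_wpDr ?weight_ge0 ?ltr01.
have [b_pos|] := boolP ((deg e b == 1) || (deg e b == 1 + weight b)).
  have db : 0 < deg e b by case/orP: b_pos => /eqP ->; rewrite ?ltr01.
  exists (-1); rewrite oppr_eq0 oner_eq0 rmorphN1 mulrN1; split=> //.
    by rewrite lt_eqF // (lt_trans _ db) // oppr_lt0 ltr01.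
  by rewrite lt_eqF // (lt_trans _ db) // oppr_lt0.
rewrite negb_or => /andP[d1 dw]; exists 1; rewrite oner_eq0 mulr1 !(eq_sym _ (deg e b)).
by split.
Qed.

Section SVPostLie.
Variables (e : bool) (pr : SV -> SV -> SV).
Hypothesis pr_postLie : is_comm_postLie e pr.

Let pr_linear : forall x c y z, pr x (c *: y + z) = c *: pr x y + pr x z.
Proof. by case: pr_postLie => _ []. Qed.
Let prC : commutative pr.
Proof. by case: pr_postLie => _ [] _ []. Qed.
Let pr_svbr_l : forall x y z, pr (svbr e x y) z = pr x (pr y z) - pr y (pr x z).
Proof. by case: pr_postLie => _ [] _ [] _ []. Qed.
Let pr_svbr_r : forall x y z, pr x (svbr e y z) = svbr e (pr x y) z + svbr e y (pr x z).
Proof. by case: pr_postLie => _ [] _ [] _ []. Qed.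

Let prZ (x : SV) (c : CC) (y : SV) : pr x (c *: y) = c *: pr x y.
Proof. exact (prZr pr_linear x c y). Qed.
Let prZl (c : CC) (x y : SV) : pr (c *: x) y = c *: pr x y.
Proof. by rewrite prC prZ prC. Qed.

Local Notation L0 := (bv (Lidx 0)).

Lemma pr_expand (x v : SV) : pr x v = \sum_(a <- msupp v) v@_a *: pr x (bv a).
Proof.
rewrite {1}[v]monalgE (pr_sumr pr_linear); apply: eq_bigr => a _.
by rewrite monalgUZ -bvE prZ.
Qed.

Lemma pr_eq0_of_basis (x : SV) : (forall a, pr x (bv a) = 0) -> forall v, pr x v = 0.
Proof. by move=> x0 v; rewrite pr_expand big1 // => a _; rewrite x0 scaler0. Qed.

Lemma pr_cyclic_basis (a b c : SVidx) :
  pr (bv a) (brb e b c) + pr (bv b) (brb e c a) + pr (bv c) (brb e a b) = 0.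
Proof. by rewrite -!svbr_basis; apply: (pr_cyclic (svbr_anti e) prC pr_svbr_r). Qed.

Lemma pr_L0_brb (a b : SVidx) :
  pr L0 (brb e a b) = (deg e a - deg e b) *: pr (bv a) (bv b).
Proof.
by rewrite -svbr_basis; apply: (pr_br_eigen (svbr_anti e) pr_linear prC pr_svbr_r);
  rewrite svbr_basis brb_L0.
Qed.

Lemma pr_eq0_of_deg (a b : SVidx) :
  deg e a != deg e b -> pr L0 (brb e a b) = 0 -> pr (bv a) (bv b) = 0.
Proof.
by move=> dab; rewrite pr_L0_brb => /scaler_eq0_r; apply; rewrite subr_eq0.
Qed.

Lemma pr_L0_cyclic (a : SVidx) (p : int) :
  cyclic_coef (weight a) (deg e a) p%:~R *: pr L0 (bv (shift (p - 1) a)) = 0.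
Proof.
have := pr_cyclic_basis (Lidx (-1)) a (Lidx p).
rewrite brb_Lr !brb_Ll !prZ => cyc.
have G1 := pr_L0_brb (Lidx (-1)) (shift p a).
rewrite brb_Ll prZ shiftD [-1 + p]addrC in G1.
have G2 := pr_L0_brb a (Lidx (p - 1)).
rewrite brb_Lr prZ in G2.
have G3 := pr_L0_brb (Lidx p) (shift (-1) a).
rewrite brb_Ll prZ shiftD in G3.
apply: eq_trans (scale_cyclic_sum (esym G1) (esym G2) (esym G3) cyc).
congr (_ *: _); rewrite /cyclic_coef !weight_shift !deg_shift /=; ring.
Qed.

Lemma pr_L0_weight_neq1 (b : SVidx) : weight b != 1 -> pr L0 (bv b) = 0.
Proof.
move=> wb; have w0 : 1 - weight b != 0 by rewrite subr_eq0 eq_sym.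
have w1 : 1 + weight b != 0 by rewrite lt0r_neq0 // ltr_wpDr ?weight_ge0 ?ltr01.
have w2 : 2 + weight b != 0 by rewrite lt0r_neq0 // ltr_wpDr ?weight_ge0 ?ltr0Sn.
have [d0|d0] := eqVneq (deg e b) 0.
  have := pr_L0_cyclic (shift (-1) b) 2.
  rewrite shiftD (_ : 2 - 1 + -1 = 0) // shift0 weight_shift deg_shift d0 addr0.
  rewrite rmorphN1 [2%:~R]/= cyclic_coef_p2 => /scaler_eq0_r; apply.
  by rewrite !mulf_neq0 // pnatr_eq0.
have := pr_L0_cyclic b 1.
rewrite subrr shift0 [1%:~R]/= cyclic_coef_p1 => /scaler_eq0_r; apply.
by rewrite !mulf_neq0 // oppr_eq0 pnatr_eq0.
Qed.

Lemma svbr_pr_L0_L (a : int) (b : SVidx) :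
  weight b != 1 -> svbr e (pr L0 (bv (Lidx a))) (bv b) = 0.
Proof.
move=> wb; have := pr_svbr_r L0 (bv (Lidx a)) (bv b).
rewrite svbr_basis brb_Ll prZ (pr_L0_weight_neq1 (b := shift a b)) ?weight_shift //.
by rewrite scaler0 (pr_L0_weight_neq1 wb) svbr0r addr0 => /esym.
Qed.

Lemma pr_L0_L_M_supported (a : int) : M_supported (pr L0 (bv (Lidx a))).
Proof.
apply: M_supported_svbr => [|k]; apply: svbr_pr_L0_L => /=.
  by rewrite eq_sym oner_eq0.
by rewrite invr_eq1 pnatr_eq1.
Qed.

Lemma pr_M_supported (x v : SV) :
  (forall j, pr x (bv (Midx j)) = 0) -> M_supported v -> pr x v = 0.
Proof.
move=> xM [vL vY]; rewrite pr_expand big1 // => -[[i|k]|j] _.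
- by rewrite vL scale0r.
- by rewrite vY scale0r.
- by rewrite xM scaler0.
Qed.

Lemma pr_LL (a t : int) :
  a != t -> pr (bv (Lidx a)) (bv (Lidx t)) = pr L0 (bv (Lidx (a + t))).
Proof.
move=> ta; have := pr_L0_brb (Lidx a) (Lidx t).
rewrite brb_Ll prZ /= mul1r => E; apply/esym/(scalerI _ E).
by rewrite subr_eq0 eqr_int.
Qed.

Lemma pr_LM (a j : int) : pr (bv (Lidx a)) (bv (Midx j)) = 0.
Proof.
have pr_LM_neq (a' j' : int) : j' != a' -> pr (bv (Lidx a')) (bv (Midx j')) = 0.
  move=> ja; apply: pr_eq0_of_deg; first by rewrite /= eqr_int eq_sym.
  by rewrite brb_Ll prZ pr_L0_weight_neq1 ?scaler0 //= eq_sym oner_eq0.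
have [-> {j}|] := eqVneq j a; last exact: pr_LM_neq.
have [t [u [tua ta ua u0]]] : exists t u : int, [/\ t + u = a, t != a, u != a & u != 0].
  by have [->|a1] := eqVneq a 1; [exists (-1), 2 | exists 1, (a - 1)]; split; lia.
have Zt : svbr e (pr (bv (Lidx a)) (bv (Lidx t))) (bv (Midx u)) = 0.
  by rewrite pr_LL 1?eq_sym //; apply/svbr_M_supported/pr_L0_L_M_supported.
have := pr_svbr_r (bv (Lidx a)) (bv (Lidx t)) (bv (Midx u)).
rewrite svbr_basis brb_Ll prZ /= tua (pr_LM_neq _ _ ua) svbr0r addr0 Zt.
by move=> /scaler_eq0_r; apply; rewrite mul0r sub0r oppr_eq0 intr_eq0.
Qed.

Lemma pr_L0_L (s : int) : pr L0 (bv (Lidx s)) = 0.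
Proof.
have [a [c [acs a0 ac]]] : exists a c : int, [/\ a + c = s, a != 0 & a != c].
  by have [->|s2] := eqVneq s 2; [exists (-1), 3 | exists 1, (s - 1)]; split; lia.
have Z1 : pr (bv (Lidx a)) (pr L0 (bv (Lidx c))) = 0.
  exact: pr_M_supported (pr_LM a) (pr_L0_L_M_supported c).
have Z2 : pr L0 (pr L0 (bv (Lidx s))) = 0.
  exact: pr_M_supported (pr_LM 0) (pr_L0_L_M_supported s).
have := pr_svbr_l (bv (Lidx a)) L0 (bv (Lidx c)).
rewrite svbr_basis brb_L0 prZl (pr_LL ac) acs Z1 Z2 subrr => /scaler_eq0_r.
by apply; rewrite intr_eq0.
Qed.

Lemma pr_L0 (v : SV) : pr L0 v = 0.
Proof.
apply: pr_eq0_of_basis => -[[i|k]|j]; first exact: pr_L0_L.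
  by apply: pr_L0_weight_neq1; rewrite /= invr_eq1 pnatr_eq1.
by apply: pr_L0_weight_neq1; rewrite /= eq_sym oner_eq0.
Qed.

Lemma pr_deg_neq (a b : SVidx) : deg e a != deg e b -> pr (bv a) (bv b) = 0.
Proof. by move=> dab; apply: pr_eq0_of_deg => //; apply: pr_L0. Qed.

Lemma pr_basis (a b : SVidx) : pr (bv a) (bv b) = 0.
Proof.
have [dab|] := eqVneq (deg e a) (deg e b); last exact: pr_deg_neq.
have [p [p0 pb wb]] := L_decomposition e b.
have aL : pr (bv a) (bv (Lidx p)) = 0 by apply: pr_deg_neq; rewrite dab eq_sym.
have aX : pr (bv a) (bv (shift (- p) b)) = 0.
  apply: pr_deg_neq; rewrite dab deg_shift eq_sym -subr_eq0 addrK.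
  by rewrite intr_eq0 oppr_eq0.
have := pr_svbr_r (bv a) (bv (Lidx p)) (bv (shift (- p) b)).
rewrite svbr_basis brb_L_shift prZ aL aX svbr0l svbr0r addr0 => /scaler_eq0_r.
by apply; rewrite subr_eq0.
Qed.

Lemma pr_eq0 (x y : SV) : pr x y = 0.
Proof.
apply: pr_eq0_of_basis => b; rewrite prC.
by apply: pr_eq0_of_basis => a; apply: pr_basis.
Qed.
End SVPostLie.

Theorem theorem4p3 (e : bool) (pr : SV -> SV -> SV) :
  is_comm_postLie e pr -> forall x y : SV, pr x y = 0.
Proof. exact: pr_eq0. Qed.
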